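(* Let $\mathcal{H}$ be a complex Hilbert space of finite dimension $n\ge2$ and $m\ge2$. Let $\mathcal{G}=(\{1,\dots,m\},E)$ be a connected undirected graph, and for each edge $(j,k)\in E$ let $U_{(j,k)}$ be the unitary on $\mathcal{H}^{\otimes m}$ swapping tensor factors $j$ and $k$. Let $q_0>0$ and $q_{j,k}>0$ for $(j,k)\in E$ with $q_0+\sum_{(j,k)\in E}q_{j,k}=1$, and define the map on operators of $\mathcal{H}^{\otimes m}$ $$\mathcal{E}(X)=q_0X+\sum_{(j,k)\in E}q_{j,k}\,U_{(j,k)}XU_{(j,k)}^\dagger.$$ Then the set of fixed points of $\mathcal{E}$ (operators $X$ with $\mathcal{E}(X)=X$) coincides with the set of permutation-invariant operators, i.e. those $X$ with $U_\pi X=XU_\pi$ for every permutation $\pi$ of $\{1,\dots,m\}$.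
   Context: For a permutation $\pi$ of $\{1,\dots,m\}$, $U_\pi$ denotes the unitary on $\mathcal{H}^{\otimes m}$ with $U_\pi(X_1\otimes\cdots\otimes X_m)U_\pi^\dagger=X_{\pi(1)}\otimes\cdots\otimes X_{\pi(m)}$ for all operators $X_i$ on $\mathcal{H}$; $U_{(j,k)}$ is $U_\pi$ for the transposition $\pi$ of $j$ and $k$. *)

From HB Require Import structures.
From mathcomp Require Import all_boot all_order all_algebra all_fingroup.
From mathcomp Require Import complex.
Set Implicit Arguments. Unset Strict Implicit. Unset Printing Implicit Defensive.
Import Order.TTheory GRing.Theory Num.Theory.
Local Open Scope ring_scope.

(* Computational basis of H^{(x) m}, H = C^n : functions b : 'I_m -> 'I_n,
   basis vector e_b = e_{b 0} (x) ... (x) e_{b (m-1)}. *)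
Definition tbasis (m n : nat) := {ffun 'I_m -> 'I_n}.
Definition tdim (m n : nat) : nat := #|{ffun 'I_m -> 'I_n}|.

(* Operators on H^{(x) m} as square matrices over R[i], rows/columns
   indexed by the enumeration of the basis. *)
Definition op (R : rcfType) (m n : nat) := 'M[R[i]]_(tdim m n).

(* U_pi e_b = e_{b o pi}; this gives
   U_pi (X_1 (x) ... (x) X_m) U_pi^dagger = X_{pi 1} (x) ... (x) X_{pi m}. *)
Definition Uperm (R : rcfType) (m n : nat) (pi : 'S_m) : op R m n :=
  \matrix_(a, b) ((enum_val a == [ffun k => (enum_val b : tbasis m n) (pi k)]) %:R).

Definition adjoint (R : rcfType) (N : nat) (A : 'M[R[i]]_N) : 'M[R[i]]_N :=
  (map_mx (@Num.conj _) A)^T.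

Definition Uswap (R : rcfType) (m n : nat) (j k : 'I_m) : op R m n :=
  Uperm R n (tperm j k).

Definition chan (R : rcfType) (m n : nat) (E : {set 'I_m * 'I_m})
    (q0 : R) (q : 'I_m * 'I_m -> R) (X : op R m n) : op R m n :=
  (q0%:C)%C *: X +
  \sum_(e in E) ((q e)%:C)%C *: (Uswap R n e.1 e.2 *m X *m adjoint (Uswap R n e.1 e.2)).

Definition adj_rel (m : nat) (E : {set 'I_m * 'I_m}) : rel 'I_m :=
  fun j k => ((j, k) \in E) || ((k, j) \in E).

(* U_pi permutes the computational basis, so it is a permutation matrix and
   conjugating by it permutes the matrix entries.  If E(X) = X then, writing
   D_e(a, c) for the change of the entry (a, c) under the swap along the edge e,
   the fixed-point equation reads sum_e q_e D_e(a, c) = 0 for every entry.  Since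
   conjugation permutes the entries, sum_(a,c) |D_e(a, c)|^2 =
   -2 Re sum_(a,c) D_e(a, c) X(a, c)^*, and weighting by q_e > 0 and summing over
   e gives 0, so every D_e vanishes: X commutes with the swaps along the edges.
   Along a path j = x_0, ..., x_r = k the transpositions (j x_(i+1)) are
   conjugates of (j x_i) by edge swaps, so X commutes with all transpositions,
   which generate the symmetric group. *)
From mathcomp Require Import all_boot all_order all_algebra all_fingroup complex.
From mathcomp Require Import ring.
Set Implicit Arguments. Unset Strict Implicit. Unset Printing Implicit Defensive.
Import Order.TTheory GRing.Theory Num.Theory.
Local Open Scope ring_scope.

Section TensorPerm.
Variables m n : nat.

Definition tensor_perm_fun (pi : 'S_m) (a : 'I_(tdim m n)) : 'I_(tdim m n) :=
  enum_rank [ffun k => (enum_val a : tbasis m n) (pi^-1%g k)].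

Lemma tensor_perm_fun_inj pi : injective (tensor_perm_fun pi).
Proof.
move=> a b /enum_rank_inj /ffunP eq_ab; apply: enum_val_inj; apply/ffunP => k.
by have := eq_ab (pi k); rewrite !ffunE permK.
Qed.

Definition tensor_perm pi : 'S_(tdim m n) := perm (@tensor_perm_fun_inj pi).

Lemma Uperm_tensor_perm (R : rcfType) pi : Uperm R n pi = perm_mx (tensor_perm pi).
Proof.
apply/matrixP => a b; rewrite !mxE permE /tensor_perm_fun.
congr (nat_of_bool _)%:R; apply/eqP/eqP => [->|<-].
  by apply: enum_val_inj; rewrite enum_rankK; apply/ffunP => k; rewrite !ffunE permKV.
by rewrite enum_rankK; apply/ffunP => k; rewrite !ffunE permK.
Qed.

Lemma tensor_perm1 : tensor_perm 1 = 1%g.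
Proof.
apply/permP => a; rewrite !permE /tensor_perm_fun invg1.
by apply: enum_val_inj; rewrite enum_rankK; apply/ffunP => k; rewrite !ffunE perm1.
Qed.

Lemma tensor_permM pi s : tensor_perm (pi * s) = (tensor_perm pi * tensor_perm s)%g.
Proof.
apply/permP => a; rewrite permM !permE /tensor_perm_fun enum_rankK; congr enum_rank.
by apply/ffunP => k; rewrite !ffunE invMg permM.
Qed.

Lemma Uperm1 (R : rcfType) : Uperm R n (1 : 'S_m)%g = 1%:M.
Proof. by rewrite Uperm_tensor_perm tensor_perm1 perm_mx1. Qed.

Lemma UpermM (R : rcfType) (pi s : 'S_m) : Uperm R n (pi * s)%g = Uperm R n pi *m Uperm R n s.
Proof. by rewrite !Uperm_tensor_perm tensor_permM perm_mxM. Qed.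

End TensorPerm.

Lemma adjoint_perm_mx (R : rcfType) N (s : 'S_N) :
  adjoint (perm_mx s : 'M[R[i]]_N) = perm_mx s^-1.
Proof.
rewrite /adjoint -tr_perm_mx; congr trmx; apply/matrixP => a b.
by rewrite !mxE conjC_nat.
Qed.

Lemma perm_mx_conjE (R : nzRingType) N (s : 'S_N) (X : 'M[R]_N) a c :
  (perm_mx s *m X *m perm_mx s^-1) a c = X (s a) (s c).
Proof. by rewrite -row_permE -col_permE !mxE. Qed.

Lemma comm_perm_mx_conj (R : nzRingType) N (s : 'S_N) (X : 'M[R]_N) :
  comm_mx (perm_mx s) X <-> perm_mx s *m X *m perm_mx s^-1 = X.
Proof.
rewrite /comm_mx; split=> [->|conjX]; first by rewrite -mulmxA -perm_mxM mulgV perm_mx1 mulmx1.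
by rewrite -{2}conjX -mulmxA -perm_mxM mulVg perm_mx1 mulmx1.
Qed.

Lemma affine_combination_fixed (K : nzRingType) (V : lmodType K) (I : finType)
    (P : pred I) (w0 : K) (w : I -> K) (v : V) (vs : I -> V) :
  w0 + \sum_(i | P i) w i = 1 ->
  (w0 *: v + \sum_(i | P i) w i *: vs i = v <-> \sum_(i | P i) w i *: (vs i - v) = 0).
Proof.
move=> sum_w; have -> : w0 = 1 - \sum_(i | P i) w i by rewrite -sum_w addrK.
rewrite scalerBl scale1r scaler_suml -addrA [- _ + _]addrC -sumrB.
under eq_bigr do rewrite -scalerBr.
split=> [/eqP|->]; last by rewrite addr0.
by rewrite addrC -subr_eq0 addrK => /eqP.
Qed.

Section PositiveAverage.
Variables (C : numClosedFieldType) (T : finType).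

Lemma sum_sqr_norm_sub_inj (phi : T -> T) (f : T -> C) : injective phi ->
  \sum_x `|f (phi x) - f x| ^+ 2 =
  \sum_x ((f x - f (phi x)) * (f x)^* + f x * (f x - f (phi x))^*).
Proof.
move=> phi_inj.
have sum_normK : \sum_x f (phi x) * (f (phi x))^* = \sum_x f x * (f x)^*.
  by rewrite [RHS](reindex_inj phi_inj).
transitivity (\sum_x ((f x - f (phi x)) * (f x)^* + f x * (f x - f (phi x))^* +
                   (f (phi x) * (f (phi x))^* - f x * (f x)^*))).
  by apply: eq_bigr => x _; rewrite normCK !rmorphB /=; ring.
by rewrite big_split /= sumrB sum_normK subrr addr0.
Qed.

Lemma positive_average_invariant (I : finType) (P : pred I) (p : I -> C)
    (phi : I -> T -> T) (f : T -> C) :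
  (forall i, P i -> 0 < p i) -> (forall i, injective (phi i)) ->
  (forall x, \sum_(i | P i) p i * (f (phi i x) - f x) = 0) ->
  forall i, P i -> forall x, f (phi i x) = f x.
Proof.
move=> p_gt0 phi_inj avg0 i Pi x.
pose d j := \sum_y `|f (phi j y) - f y| ^+ 2.
have d_ge0 j : 0 <= d j by apply: sumr_ge0 => y _; apply: exprn_ge0.
have avg_d0 : \sum_(j | P j) p j * d j = 0.
  under eq_bigr do rewrite /d sum_sqr_norm_sub_inj // mulr_sumr.
  rewrite exchange_big /= big1 // => y _.
  rewrite (eq_bigr (fun j => (p j * (f y - f (phi j y))) * (f y)^* +
        f y * (p j * (f y - f (phi j y)))^*)); last first.
    by move=> j Pj; rewrite rmorphM /= (conj_Creal (gtr0_real (p_gt0 j Pj))); ring.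
  rewrite big_split /= -mulr_suml -mulr_sumr -rmorph_sum /=.
  have -> : \sum_(j | P j) p j * (f y - f (phi j y)) = 0.
    by rewrite -[RHS]oppr0 -[in RHS](avg0 y) -sumrN; apply: eq_bigr => j _; ring.
  by rewrite rmorph0 mul0r mulr0 addr0.
have /eqP : p i * d i = 0.
  by apply: (psumr_eq0P _ avg_d0) => // j Pj; rewrite mulr_ge0 // ltW ?p_gt0.
rewrite mulf_eq0 gt_eqF ?p_gt0 //= => /eqP di0.
have /eqP : `|f (phi i x) - f x| ^+ 2 = 0.
  by apply: (psumr_eq0P _ di0) => // y _; apply: exprn_ge0.
by rewrite sqrf_eq0 normr_eq0 subr_eq0 => /eqP.
Qed.

End PositiveAverage.

Lemma perm_conj_average_fixed (C : numClosedFieldType) N (I : finType) (P : pred I)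
    (p : I -> C) (s : I -> 'S_N) (X : 'M[C]_N) :
  (forall i, P i -> 0 < p i) ->
  \sum_(i | P i) p i *: (perm_mx (s i) *m X *m perm_mx (s i)^-1 - X) = 0 ->
  forall i, P i -> perm_mx (s i) *m X *m perm_mx (s i)^-1 = X.
Proof.
move=> p_gt0 avg0 i Pi; apply/matrixP => a c; rewrite perm_mx_conjE.
apply: (positive_average_invariant (phi := fun i x => (s i x.1, s i x.2))
   (f := fun x => X x.1 x.2) p_gt0 _ _ Pi (a, c)) => [j [x1 x2] [y1 y2] /=|[x y] /=].
  by case=> /perm_inj -> /perm_inj ->.
have := congr1 (fun M : 'M[C]_N => M x y) avg0; rewrite summxE mxE => avg0_xy.
rewrite -[RHS]avg0_xy; apply: eq_bigr => j _.
by rewrite 2!mxE perm_mx_conjE [(- X) _ _]mxE.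
Qed.

Section TranspositionGeneration.
Variables (T : finType) (e : rel T) (P : {perm T} -> Prop).
Hypotheses (P1 : P 1%g) (PM : forall s t, P s -> P t -> P (s * t)%g).
Hypothesis P_edge : forall x y, e x y -> P (tperm x y).

Lemma tperm_path_closed j x p :
  P (tperm j x) -> path e x p -> P (tperm j (last x p)).
Proof.
elim: p x => [|y p IH] x //= Pjx /andP[e_xy e_p]; apply: IH e_p.
have [<-|ne_jy] := eqVneq j y; first by rewrite tperm1.
have [->|ne_jx] := eqVneq j x; first exact: P_edge.
have -> : tperm j y = (tperm x y * tperm j x * tperm x y)%g.
  by rewrite -{1}(tpermV x y) -mulgA -conjgE tpermJ tpermL tpermD // eq_sym.
exact: PM (PM (P_edge e_xy) Pjx) (P_edge e_xy).
Qed.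

Hypothesis e_connected : forall j k, connect e j k.

Lemma perm_closed_connected s : P s.
Proof.
have Ptperm j k : P (tperm j k).
  have /connectP [p e_p ->] := e_connected j k.
  by apply: tperm_path_closed e_p; rewrite tperm1.
have [ts -> _] := prod_tpermP s.
by elim: ts => [|t ts IH]; rewrite ?big_nil ?big_cons //; apply: PM.
Qed.

End TranspositionGeneration.

Theorem lemma1 (R : rcfType) (n m : nat) (hn : (2 <= n)%N) (hm : (2 <= m)%N)
    (E : {set 'I_m * 'I_m})
    (hE : forall e, e \in E -> (e.1 < e.2)%N)
    (hconn : forall j k : 'I_m, connect (adj_rel E) j k)
    (q0 : R) (q : 'I_m * 'I_m -> R)
    (hq0 : 0 < q0) (hq : forall e, e \in E -> 0 < q e)
    (hsum : q0 + \sum_(e in E) q e = 1) :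
  forall X : op R m n,
    chan E q0 q X = X <-> (forall pi : 'S_m, Uperm R n pi *m X = X *m Uperm R n pi).
Proof.
move=> X; pose s (e : 'I_m * 'I_m) := @tensor_perm m n (tperm e.1 e.2).
have sumC : (q0%:C + \sum_(e in E) (q e)%:C = 1 :> R[i])%C.
  by rewrite -rmorph_sum -rmorphD /= hsum.
rewrite /chan (eq_bigr (fun e => (q e)%:C%C *: (perm_mx (s e) *m X *m perm_mx (s e)^-1)));
  last by move=> e _; rewrite /Uswap Uperm_tensor_perm adjoint_perm_mx.
rewrite (affine_combination_fixed _ _ sumC); split=> [fixed | commute]; last first.
  apply: big1 => e _; have /comm_perm_mx_conj -> : comm_mx (perm_mx (s e)) X.
    by rewrite /comm_mx -Uperm_tensor_perm commute.
  by rewrite subrr scaler0.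
have q_gt0 e : e \in E -> 0 < (q e)%:C%C :> R[i] by move=> eE; rewrite ltcR hq.
have edge_conj := perm_conj_average_fixed q_gt0 fixed.
have edge_comm j k : adj_rel E j k -> comm_mx X (Uperm R n (tperm j k)).
  case/orP => [jkE | kjE]; apply: comm_mx_sym; rewrite Uperm_tensor_perm.
    exact/comm_perm_mx_conj/(edge_conj (j, k)).
  by rewrite tpermC; apply/comm_perm_mx_conj/(edge_conj (k, j)).
move=> pi; apply: comm_mx_sym; move: pi.
apply: (perm_closed_connected (e := adj_rel E)) => //.
- by rewrite Uperm1; apply: comm_mx1.
- by move=> pi s' ? ?; rewrite UpermM; apply: comm_mxM.
Qed.
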